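(* Let $X$ be a locally compact Polish space with compatible metric $d$. Suppose there are a closed discrete sequence $(x_n)_{n\in\mathbb N}$ of distinct points of $X$ and pairwise disjoint open sets $U_n\ni x_n$ such that each $U_n$ is a topological manifold of positive dimension. Then $(X,d)$ is flexible. In particular, every noncompact, second-countable topological manifold of positive dimension, with any compatible metric, is flexible.
   Context: For closed $Y\subseteq X$, $\partial_X Y=Y\cap\overline{X\setminus Y}$ and $\mathrm{Homeo}_{\partial}(Y)$ is the group of homeomorphisms of $Y$ fixing each point of $\partial_X Y$; such $\phi$ extends to a homeomorphism $\tilde\phi$ of $X$ equal to the identity off $Y$, and its radius is $r(\phi)=\sup_{x\in X}d(x,\tilde\phi(x))$. A locally compact noncompact Polish space $X$ with compatible metric $d$ is flexible if there are pairwise disjoint sets $Y_n\subseteq X$ and $\phi_{n,m}\in\mathrm{Homeo}_\partial(Y_n)$ ($n,m\in\mathbb N$) such that: (1) each $Y_n$ is compact and no compact subset of $X$ meets infinitely many $Y_n$; (2) for each $n$, $(r(\phi_{n,m}))_m$ is decreasing and tends to $0$, and $r(\phi_{n,m})\ne0$ for all $n,m$. *)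

From Stdlib Require Import Reals Lra Classical List.
From Stdlib Require Fin.
Open Scope R_scope.

Definition is_metric {X : Type} (d : X -> X -> R) : Prop :=
  (forall x y, 0 <= d x y) /\ (forall x y, d x y = 0 <-> x = y) /\
  (forall x y, d x y = d y x) /\ (forall x y z, d x z <= d x y + d y z).

Definition is_open {X : Type} (d : X -> X -> R) (U : X -> Prop) : Prop :=
  forall x, U x -> exists e, 0 < e /\ forall y, d x y < e -> U y.

Definition is_closed {X : Type} (d : X -> X -> R) (F : X -> Prop) : Prop :=
  is_open d (fun x => ~ F x).

Definition closure {X : Type} (d : X -> X -> R) (A : X -> Prop) : X -> Prop :=
  fun x => forall e, 0 < e -> exists y, A y /\ d x y < e.

Definition is_compact {X : Type} (d : X -> X -> R) (K : X -> Prop) : Prop :=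
  forall (I : Type) (U : I -> X -> Prop),
    (forall i, is_open d (U i)) -> (forall x, K x -> exists i, U i x) ->
    exists l : list I, forall x, K x -> exists i, In i l /\ U i x.

Definition locally_compact {X : Type} (d : X -> X -> R) : Prop :=
  forall x, exists (V K : X -> Prop),
    is_open d V /\ V x /\ is_compact d K /\ (forall y, V y -> K y).

Definition separable {X : Type} (d : X -> X -> R) : Prop :=
  exists (D : X -> Prop) (g : X -> nat),
    (forall x y, D x -> D y -> g x = g y -> x = y) /\
    (forall x e, 0 < e -> exists y, D y /\ d x y < e).

Definition same_topology {X : Type} (d d' : X -> X -> R) : Prop :=
  forall U : X -> Prop, is_open d U <-> is_open d' U.

Definition complete {X : Type} (d : X -> X -> R) : Prop :=
  forall u : nat -> X,
    (forall e, 0 < e -> exists N, forall p q, (N <= p)%nat -> (N <= q)%nat -> d (u p) (u q) < e) ->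
    exists l, forall e, 0 < e -> exists N, forall p, (N <= p)%nat -> d (u p) l < e.

Definition polish {X : Type} (d : X -> X -> R) : Prop :=
  separable d /\ exists d' : X -> X -> R, is_metric d' /\ same_topology d d' /\ complete d'.

Definition second_countable {X : Type} (d : X -> X -> R) : Prop :=
  exists B : nat -> X -> Prop, (forall n, is_open d (B n)) /\
    forall U, is_open d U -> forall x, U x -> exists n, B n x /\ forall y, B n y -> U y.

(* Euclidean space R^m as Fin.t m -> R, with the (sup-norm, equivalently Euclidean) topology *)
Definition Eucl (m : nat) : Type := Fin.t m -> R.

Definition open_E (m : nat) (W : Eucl m -> Prop) : Prop :=
  forall v, W v -> exists e, 0 < e /\ forall w, (forall i, Rabs (w i - v i) < e) -> W w.

Definition cont_to_E {X : Type} (d : X -> X -> R) (m : nat) (A : X -> Prop) (f : X -> Eucl m) : Prop :=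
  forall x, A x -> forall e, 0 < e -> exists dl, 0 < dl /\
    forall y, A y -> d x y < dl -> forall i, Rabs (f y i - f x i) < e.

Definition cont_from_E {X : Type} (d : X -> X -> R) (m : nat) (W : Eucl m -> Prop) (g : Eucl m -> X) : Prop :=
  forall v, W v -> forall e, 0 < e -> exists dl, 0 < dl /\
    forall w, W w -> (forall i, Rabs (w i - v i) < dl) -> d (g v) (g w) < e.

Definition locally_euclidean {X : Type} (d : X -> X -> R) (A : X -> Prop) (m : nat) : Prop :=
  forall x, A x -> exists (V : X -> Prop) (W : Eucl m -> Prop) (phi : X -> Eucl m) (psi : Eucl m -> X),
    is_open d V /\ V x /\ (forall y, V y -> A y) /\ open_E m W /\
    (forall y, V y -> W (phi y)) /\ (forall w, W w -> V (psi w)) /\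
    (forall y, V y -> psi (phi y) = y) /\ (forall w, W w -> phi (psi w) = w) /\
    cont_to_E d m V phi /\ cont_from_E d m W psi.

(* A (a subspace of a metric space, hence Hausdorff) is a topological manifold
   of positive dimension *)
Definition manifold_pos {X : Type} (d : X -> X -> R) (A : X -> Prop) : Prop :=
  exists m, (1 <= m)%nat /\ locally_euclidean d A m.

Definition closed_discrete_seq {X : Type} (d : X -> X -> R) (x : nat -> X) : Prop :=
  (forall n k, x n = x k -> n = k) /\
  is_closed d (fun y => exists n, x n = y) /\
  (forall n, exists e, 0 < e /\ forall k, d (x n) (x k) < e -> k = n).

Definition rel_boundary {X : Type} (d : X -> X -> R) (Y : X -> Prop) : X -> Prop :=
  fun x => Y x /\ closure d (fun z => ~ Y z) x.

Definition cont_on {X : Type} (d : X -> X -> R) (A : X -> Prop) (f : X -> X) : Prop :=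
  forall x, A x -> forall e, 0 < e -> exists dl, 0 < dl /\
    forall y, A y -> d x y < dl -> d (f x) (f y) < e.

(* f : X -> X is the extension (identity off Y) of an element of Homeo_∂(Y) *)
Definition homeo_bd {X : Type} (d : X -> X -> R) (Y : X -> Prop) (f : X -> X) : Prop :=
  (forall x, ~ Y x -> f x = x) /\
  (forall y, Y y -> Y (f y)) /\
  (exists g : X -> X, (forall y, Y y -> Y (g y)) /\
     (forall y, Y y -> g (f y) = y) /\ (forall y, Y y -> f (g y) = y) /\
     cont_on d Y f /\ cont_on d Y g) /\
  (forall x, rel_boundary d Y x -> f x = x).

Definition radius {X : Type} (d : X -> X -> R) (f : X -> X) (r : R) : Prop :=
  is_lub (fun t => exists x, t = d x (f x)) r.

Definition flexible {X : Type} (d : X -> X -> R) : Prop :=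
  locally_compact d /\ ~ is_compact d (fun _ => True) /\ polish d /\
  exists (Y : nat -> X -> Prop) (phi : nat -> nat -> X -> X) (r : nat -> nat -> R),
    (forall n k, n <> k -> forall x, Y n x -> ~ Y k x) /\
    (forall n, is_compact d (Y n)) /\
    (forall K, is_compact d K -> exists N, forall n, (N <= n)%nat -> forall x, K x -> ~ Y n x) /\
    (forall n m, homeo_bd d (Y n) (phi n m)) /\
    (forall n m, radius d (phi n m) (r n m)) /\
    (forall n, Un_decreasing (r n) /\ Un_cv (r n) 0) /\
    (forall n m, r n m <> 0).

(** The flexing maps come from one elementary homeomorphism of a cube in
    [R^m]: shear one coordinate by a tent function whose height
    [(a - sum_(j <> i0) |v j - c j|)^+] vanishes on the boundary of the cube
    [|v - c|_oo <= a].  It fixes the boundary, moves the centre, and is the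
    identity off the cube.  Transported through a chart around [x n], with
    cubes of size [a -> 0] chosen inside a fixed compact chart cube [Y n]
    lying in the ball of radius [1/(n+1)] about [x n], this yields
    homeomorphisms in [Homeo_∂(Y n)] of positive radii tending to [0]; a
    subsequence makes the radii decreasing.  Since the [x n] are closed and
    discrete, a compact set stays away from all but finitely many [x n], hence
    meets only finitely many [Y n]; the same discreteness makes [X]
    noncompact.

    For a noncompact second-countable manifold, charts give local
    compactness; an open cover without finite subcover, refined along a
    countable base, yields a closed discrete sequence; and
    [d x y + |1/l x - 1/l y|], where [l x] is the supremum of the radii of
    compact closed balls about [x], is a complete metric equivalent to [d]. *)

From Stdlib Require Import Reals Lra Lia List Classical ClassicalEpsilon FunctionalExtensionality.
From Stdlib Require Fin.
Open Scope R_scope.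

Ltac destruct_piecewise :=
  repeat match goal with
  | |- context [Rle_dec ?a ?b] => destruct (Rle_dec a b)
  | H : context [Rle_dec ?a ?b] |- _ => destruct (Rle_dec a b)
  | |- context [Rcase_abs ?a] => destruct (Rcase_abs a)
  | H : context [Rcase_abs ?a] |- _ => destruct (Rcase_abs a)
  end.

Ltac piecewise_lra := unfold Rmax, Rmin, Rabs in *; destruct_piecewise; try lra.

(** * Shearing a cube *)

(* [tent_shift r c] has slopes [1/2] and [3/2] on [(c - r, c + r)] and is the
   identity elsewhere; [tent_unshift r c] is its inverse. *)
Definition tent_shift (r c x : R) := x + / 2 * Rmax 0 (r - Rabs (x - c)).
Definition tent_unshift (r c y : R) := y - Rmax 0 (Rmin ((y - c + r) / 3) (r - (y - c))).

Lemma tent_shiftK r c x : 0 <= r -> tent_unshift r c (tent_shift r c x) = x.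
Proof. intros. unfold tent_unshift, tent_shift. piecewise_lra. Qed.

Lemma tent_unshiftK r c y : 0 <= r -> tent_shift r c (tent_unshift r c y) = y.
Proof. intros. unfold tent_unshift, tent_shift. piecewise_lra. Qed.

Lemma tent_shift_far r c x : r <= Rabs (x - c) -> tent_shift r c x = x.
Proof. intros. unfold tent_shift. piecewise_lra. Qed.

Lemma tent_unshift_far r c y : r <= Rabs (y - c) -> tent_unshift r c y = y.
Proof. intros. unfold tent_unshift. piecewise_lra. Qed.

Lemma tent_shift_interval r c x a :
  0 <= r <= a -> Rabs (x - c) <= a -> Rabs (tent_shift r c x - c) <= a.
Proof. intros. unfold tent_shift. piecewise_lra. Qed.

Lemma tent_unshift_interval r c y a :
  0 <= r <= a -> Rabs (y - c) <= a -> Rabs (tent_unshift r c y - c) <= a.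
Proof. intros. unfold tent_unshift. piecewise_lra. Qed.

Lemma tent_shift_lipschitz r r' c x x' e :
  Rabs (r - r') <= e -> Rabs (x - x') <= e -> Rabs (tent_shift r c x - tent_shift r' c x') <= 2 * e.
Proof. intros. unfold tent_shift. piecewise_lra. Qed.

Lemma tent_unshift_lipschitz r r' c y y' e :
  Rabs (r - r') <= e -> Rabs (y - y') <= e -> Rabs (tent_unshift r c y - tent_unshift r' c y') <= 3 * e.
Proof. intros. unfold tent_unshift. piecewise_lra. Qed.

Fixpoint fin_sum (n : nat) : (Fin.t n -> R) -> R :=
  match n return (Fin.t n -> R) -> R with
  | O => fun _ => 0
  | S k => fun f => f Fin.F1 + fin_sum k (fun j => f (Fin.FS j))
  end.

Lemma fin_sum_nonneg n f : (forall j, 0 <= f j) -> 0 <= fin_sum n f.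
Proof.
  revert f; induction n as [|n IH]; intros f Hf; simpl; [lra|].
  pose proof (Hf Fin.F1). pose proof (IH (fun j => f (Fin.FS j)) (fun j => Hf _)). lra.
Qed.

Lemma fin_sum_eq0 n f : (forall j, f j = 0) -> fin_sum n f = 0.
Proof.
  revert f; induction n as [|n IH]; intros f Hf; simpl; auto.
  rewrite Hf, IH; auto. ring.
Qed.

Lemma fin_sum_ge_term n f i : (forall j, 0 <= f j) -> f i <= fin_sum n f.
Proof.
  revert f; induction i as [n|n i IH]; intros f Hf; simpl.
  - pose proof (fin_sum_nonneg n (fun j => f (Fin.FS j)) (fun j => Hf _)). lra.
  - pose proof (IH (fun j => f (Fin.FS j)) (fun j => Hf _)). pose proof (Hf Fin.F1). lra.
Qed.

Lemma fin_sum_lipschitz n f g e : 0 <= e -> (forall j, Rabs (f j - g j) <= e) ->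
  Rabs (fin_sum n f - fin_sum n g) <= INR n * e.
Proof.
  revert f g; induction n as [|n IH]; intros f g He Hfg.
  - simpl. rewrite Rminus_0_r, Rabs_R0. lra.
  - rewrite S_INR. simpl fin_sum.
    pose proof (IH (fun j => f (Fin.FS j)) (fun j => g (Fin.FS j)) He (fun j => Hfg _)).
    pose proof (Hfg Fin.F1).
    replace (f Fin.F1 + fin_sum n (fun j => f (Fin.FS j)) - (g Fin.F1 + fin_sum n (fun j => g (Fin.FS j))))
      with ((f Fin.F1 - g Fin.F1) + (fin_sum n (fun j => f (Fin.FS j)) - fin_sum n (fun j => g (Fin.FS j))))
      by ring.
    eapply Rle_trans; [apply Rabs_triang|]. lra.
Qed.

Section Shear.
Variable m : nat.
Variable i0 : Fin.t m.
Variable c : Eucl m.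
Variable a : R.

Definition in_cube (b : R) (v : Eucl m) := forall i, Rabs (v i - c i) <= b.
Definition in_open_cube (b : R) (v : Eucl m) := forall i, Rabs (v i - c i) < b.

Definition others_dist (v : Eucl m) :=
  fin_sum m (fun i => if Fin.eq_dec i i0 then 0 else Rabs (v i - c i)).
Definition shear_height (v : Eucl m) := Rmax 0 (a - others_dist v).

Definition shear (v : Eucl m) : Eucl m :=
  fun i => if Fin.eq_dec i i0 then tent_shift (shear_height v) (c i) (v i) else v i.
Definition unshear (v : Eucl m) : Eucl m :=
  fun i => if Fin.eq_dec i i0 then tent_unshift (shear_height v) (c i) (v i) else v i.

Lemma in_open_cube_in_cube b v : in_open_cube b v -> in_cube b v.
Proof. intros H i. left. apply H. Qed.

Lemma others_dist_nonneg v : 0 <= others_dist v.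
Proof. apply fin_sum_nonneg. intro k. destruct (Fin.eq_dec k i0); [lra|apply Rabs_pos]. Qed.

Lemma shear_height_nonneg v : 0 <= shear_height v.
Proof. apply Rmax_l. Qed.

Lemma shear_height_le v : 0 <= a -> shear_height v <= a.
Proof. intros. pose proof (others_dist_nonneg v). unfold shear_height. piecewise_lra. Qed.

Lemma shear_height_shear v : shear_height (shear v) = shear_height v.
Proof.
  unfold shear_height, others_dist, shear. do 3 f_equal.
  extensionality i. destruct (Fin.eq_dec i i0); auto.
Qed.

Lemma shear_height_unshear v : shear_height (unshear v) = shear_height v.
Proof.
  unfold shear_height, others_dist, unshear. do 3 f_equal.
  extensionality i. destruct (Fin.eq_dec i i0); auto.
Qed.

Lemma shearK v : unshear (shear v) = v.
Proof.
  extensionality i. unfold unshear. rewrite shear_height_shear.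
  unfold shear. destruct (Fin.eq_dec i i0); auto. apply tent_shiftK, shear_height_nonneg.
Qed.

Lemma unshearK v : shear (unshear v) = v.
Proof.
  extensionality i. unfold shear. rewrite shear_height_unshear.
  unfold unshear. destruct (Fin.eq_dec i i0); auto. apply tent_unshiftK, shear_height_nonneg.
Qed.

Lemma shear_height_out v : ~ in_open_cube a v -> shear_height v <= Rabs (v i0 - c i0).
Proof.
  intros Hv. apply not_all_ex_not in Hv as [j Hj]. apply Rnot_lt_le in Hj.
  unfold shear_height. destruct (Fin.eq_dec j i0) as [->|Hji].
  - pose proof (others_dist_nonneg v). pose proof (Rabs_pos (v i0 - c i0)). piecewise_lra.
  - assert (a <= others_dist v).
    { eapply Rle_trans; [|apply fin_sum_ge_term with (i := j)].
      - destruct (Fin.eq_dec j i0); [contradiction|lra].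
      - intros k. destruct (Fin.eq_dec k i0); [lra|apply Rabs_pos]. }
    pose proof (Rabs_pos (v i0 - c i0)). piecewise_lra.
Qed.

Lemma shear_support v : shear v <> v -> in_open_cube a v.
Proof.
  intros Hne. apply NNPP. intros Hv. apply Hne. extensionality i. unfold shear.
  destruct (Fin.eq_dec i i0) as [->|]; auto. apply tent_shift_far, shear_height_out; auto.
Qed.

Lemma unshear_support v : unshear v <> v -> in_open_cube a v.
Proof.
  intros Hne. apply NNPP. intros Hv. apply Hne. extensionality i. unfold unshear.
  destruct (Fin.eq_dec i i0) as [->|]; auto. apply tent_unshift_far, shear_height_out; auto.
Qed.

Lemma shear_cube v : 0 <= a -> in_cube a v -> in_cube a (shear v).
Proof.
  intros Ha Hv i. unfold shear. destruct (Fin.eq_dec i i0); auto.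
  apply tent_shift_interval; auto. split; [apply shear_height_nonneg|apply shear_height_le; auto].
Qed.

Lemma unshear_cube v : 0 <= a -> in_cube a v -> in_cube a (unshear v).
Proof.
  intros Ha Hv i. unfold unshear. destruct (Fin.eq_dec i i0); auto.
  apply tent_unshift_interval; auto. split; [apply shear_height_nonneg|apply shear_height_le; auto].
Qed.

Lemma shear_height_lipschitz v w e : 0 <= e -> (forall j, Rabs (v j - w j) <= e) ->
  Rabs (shear_height v - shear_height w) <= INR m * e.
Proof.
  intros He Hvw.
  assert (Rabs (others_dist v - others_dist w) <= INR m * e).
  { apply fin_sum_lipschitz; auto. intro j. destruct (Fin.eq_dec j i0).
    - rewrite Rminus_0_r, Rabs_R0; auto.
    - specialize (Hvw j). piecewise_lra. }
  unfold shear_height. piecewise_lra.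
Qed.

Lemma shear_lipschitz v w e : 0 <= e -> (forall j, Rabs (v j - w j) <= e) ->
  forall i, Rabs (shear v i - shear w i) <= 2 * (INR m + 1) * e.
Proof.
  intros He Hvw i. pose proof (pos_INR m). pose proof (shear_height_lipschitz v w e He Hvw).
  specialize (Hvw i). unfold shear. destruct (Fin.eq_dec i i0); [|nra].
  eapply Rle_trans; [apply tent_shift_lipschitz with (e := (INR m + 1) * e)|]; nra.
Qed.

Lemma unshear_lipschitz v w e : 0 <= e -> (forall j, Rabs (v j - w j) <= e) ->
  forall i, Rabs (unshear v i - unshear w i) <= 3 * (INR m + 1) * e.
Proof.
  intros He Hvw i. pose proof (pos_INR m). pose proof (shear_height_lipschitz v w e He Hvw).
  specialize (Hvw i). unfold unshear. destruct (Fin.eq_dec i i0); [|nra].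
  eapply Rle_trans; [apply tent_unshift_lipschitz with (e := (INR m + 1) * e)|]; nra.
Qed.

Lemma shear_moves_centre : 0 < a -> shear c <> c.
Proof.
  intros Ha E. assert (Hh : shear_height c = a).
  { unfold shear_height, others_dist. rewrite fin_sum_eq0.
    - piecewise_lra.
    - intro j. destruct (Fin.eq_dec j i0); auto. rewrite Rminus_diag, Rabs_R0; auto. }
  assert (E0 : shear c i0 = c i0) by (rewrite E; auto).
  unfold shear in E0. destruct (Fin.eq_dec i0 i0) as [_|n]; [|now apply n].
  unfold tent_shift in E0. rewrite Hh, Rminus_diag, Rabs_R0 in E0. piecewise_lra.
Qed.
End Shear.

(** * Heine–Borel for boxes *)

Fixpoint fin_enum (n : nat) : list (Fin.t n) :=
  match n with O => nil | S k => Fin.F1 :: map Fin.FS (fin_enum k) end.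

Lemma fin_enum_complete n (i : Fin.t n) : In i (fin_enum n).
Proof. induction i; simpl; auto. right. apply in_map; auto. Qed.

Section HeineBorel.
Variable m : nat.
Variable I : Type.
Variable cover : I -> Eucl m -> Prop.

Definition box (lo hi : Eucl m) (v : Eucl m) := forall i, lo i <= v i <= hi i.
Definition subbox (lo hi lo' hi' : Eucl m) := forall i, lo i <= lo' i /\ hi' i <= hi i.
Definition finitely_covered (S : Eucl m -> Prop) :=
  exists l : list I, forall v, S v -> exists i, In i l /\ cover i v.

Lemma uncovered_box_nonempty lo hi : ~ finitely_covered (box lo hi) -> forall i, lo i <= hi i.
Proof.
  intros H i. destruct (Rle_dec (lo i) (hi i)); auto. exfalso. apply H.
  exists nil. intros v Hv. specialize (Hv i). lra.
Qed.

Lemma halve_box_coord lo hi j : ~ finitely_covered (box lo hi) ->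
  exists lo' hi', ~ finitely_covered (box lo' hi') /\ subbox lo hi lo' hi' /\
    hi' j - lo' j <= (hi j - lo j) / 2.
Proof.
  intros H. pose proof (uncovered_box_nonempty _ _ H) as Hne.
  set (mid := (lo j + hi j) / 2).
  set (hi1 := fun i => if Fin.eq_dec i j then mid else hi i).
  set (lo2 := fun i => if Fin.eq_dec i j then mid else lo i).
  destruct (classic (finitely_covered (box lo hi1))) as [[l1 H1]|H1].
  - destruct (classic (finitely_covered (box lo2 hi))) as [[l2 H2]|H2].
    + exfalso. apply H. exists (l1 ++ l2). intros v Hv.
      destruct (Rle_dec (v j) mid).
      * destruct (H1 v) as [i [Hi Ci]].
        { intro k. unfold hi1. destruct (Fin.eq_dec k j); [subst; split; [apply Hv|auto]|apply Hv]. }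
        exists i; split; auto. apply in_or_app; auto.
      * destruct (H2 v) as [i [Hi Ci]].
        { intro k. unfold lo2. destruct (Fin.eq_dec k j); [subst; split; [lra|apply Hv]|apply Hv]. }
        exists i; split; auto. apply in_or_app; auto.
    + exists lo2, hi. split; auto. split.
      * intro i. unfold lo2. specialize (Hne i). destruct (Fin.eq_dec i j); [subst; unfold mid; lra|lra].
      * unfold lo2. destruct (Fin.eq_dec j j) as [_|n]; [|now destruct n]. unfold mid; lra.
  - exists lo, hi1. split; auto. split.
    + intro i. unfold hi1. specialize (Hne i). destruct (Fin.eq_dec i j); [subst; unfold mid; lra|lra].
    + unfold hi1. destruct (Fin.eq_dec j j) as [_|n]; [|now destruct n]. unfold mid; lra.
Qed.

Lemma halve_box_coords (L : list (Fin.t m)) lo hi : ~ finitely_covered (box lo hi) ->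
  exists lo' hi', ~ finitely_covered (box lo' hi') /\ subbox lo hi lo' hi' /\
    forall j, In j L -> hi' j - lo' j <= (hi j - lo j) / 2.
Proof.
  revert lo hi; induction L as [|j L IH]; intros lo hi H.
  - exists lo, hi. split; auto. split; [intro; lra|]. intros j [].
  - destruct (halve_box_coord lo hi j H) as [lo1 [hi1 [H1 [S1 W1]]]].
    destruct (IH lo1 hi1 H1) as [lo2 [hi2 [H2 [S2 W2]]]].
    exists lo2, hi2. split; auto. split.
    + intro i. specialize (S1 i); specialize (S2 i); lra.
    + intros k [Hjk|Hk].
      * subst k. specialize (S2 j). lra.
      * specialize (W2 k Hk). specialize (S1 k). lra.
Qed.

Definition halving_step (lo hi lo' hi' : Eucl m) :=
  ~ finitely_covered (box lo' hi') /\ subbox lo hi lo' hi' /\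
  forall j, hi' j - lo' j <= (hi j - lo j) / 2.

Lemma halve_box (p : Eucl m * Eucl m) : ~ finitely_covered (box (fst p) (snd p)) ->
  exists q : Eucl m * Eucl m, halving_step (fst p) (snd p) (fst q) (snd q).
Proof.
  intros H. destruct (halve_box_coords (fin_enum m) _ _ H) as [lo' [hi' [H1 [H2 H3]]]].
  exists (lo', hi'). split; [exact H1|split; [exact H2|]]. intro j. apply H3, fin_enum_complete.
Qed.

Definition halve (p : Eucl m * Eucl m) : Eucl m * Eucl m :=
  match excluded_middle_informative (~ finitely_covered (box (fst p) (snd p))) with
  | left H => proj1_sig (constructive_indefinite_description _ (halve_box p H))
  | right _ => p
  end.

Fixpoint halvings (p : Eucl m * Eucl m) (k : nat) : Eucl m * Eucl m :=
  match k with O => p | S k' => halve (halvings p k') end.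

Lemma halve_spec p : ~ finitely_covered (box (fst p) (snd p)) ->
  halving_step (fst p) (snd p) (fst (halve p)) (snd (halve p)).
Proof.
  intros H. unfold halve. destruct (excluded_middle_informative _) as [h|h]; [|contradiction].
  destruct (constructive_indefinite_description _ _) as [q Q]. exact Q.
Qed.

Section Halvings.
Variables lo hi : Eucl m.
Hypothesis Hunc : ~ finitely_covered (box lo hi).

Let lo_at k := fst (halvings (lo, hi) k).
Let hi_at k := snd (halvings (lo, hi) k).

Lemma halvings_uncovered k : ~ finitely_covered (box (lo_at k) (hi_at k)).
Proof. induction k as [|k IH]; [exact Hunc|]. apply (halve_spec (halvings (lo, hi) k) IH). Qed.

Lemma halvings_step k : halving_step (lo_at k) (hi_at k) (lo_at (S k)) (hi_at (S k)).
Proof. apply (halve_spec (halvings (lo, hi) k) (halvings_uncovered k)). Qed.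

Lemma halvings_nested k k' : (k <= k')%nat -> subbox (lo_at k) (hi_at k) (lo_at k') (hi_at k').
Proof.
  induction 1 as [|k' _ IH]; intro i; [lra|].
  destruct (halvings_step k') as [_ [S _]]. specialize (S i). specialize (IH i). lra.
Qed.

Lemma halvings_width k i : hi_at k i - lo_at k i <= (hi i - lo i) * (/ 2) ^ k.
Proof.
  induction k as [|k IH]; [simpl; unfold hi_at, lo_at; simpl; lra|].
  destruct (halvings_step k) as [_ [_ W]]. specialize (W i). simpl pow. lra.
Qed.

Lemma halvings_common_point : exists z, forall k i, lo_at k i <= z i <= hi_at k i.
Proof.
  assert (Hlh : forall k k' i, lo_at k i <= hi_at k' i).
  { intros k k' i.
    assert (Hne : forall k, lo_at k i <= hi_at k i)
      by (intro k0; apply (uncovered_box_nonempty _ _ (halvings_uncovered k0))).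
    destruct (Nat.le_ge_cases k k') as [h|h]; pose proof (halvings_nested _ _ h i);
      [pose proof (Hne k')|pose proof (Hne k)]; lra. }
  assert (Hz : forall i, exists z, is_lub (fun t => exists k, t = lo_at k i) z).
  { intro i. destruct (completeness (fun t => exists k, t = lo_at k i)) as [z Hz].
    - exists (hi_at O i). intros t [k ->]. apply Hlh.
    - exists (lo_at O i). eauto.
    - eauto. }
  exists (fun i => proj1_sig (constructive_indefinite_description _ (Hz i))).
  intros k i. destruct (constructive_indefinite_description _ _) as [zi [U1 U2]]. simpl.
  split; [apply U1; eauto|apply U2; intros t [k' ->]; apply Hlh].
Qed.
End Halvings.

Lemma eventually_geometric_lt M e : 0 < e -> exists N, M * (/ 2) ^ N < e.
Proof.
  intros He. destruct (Rle_lt_dec M 0) as [HM|HM].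
  - exists O. simpl. lra.
  - destruct (pow_lt_1_zero (/ 2) ltac:(rewrite Rabs_pos_eq; lra) (e / M)
      ltac:(apply Rdiv_lt_0_compat; lra)) as [N HN].
    exists N. specialize (HN N (le_n N)). rewrite Rabs_pos_eq in HN by (apply pow_le; lra).
    apply Rmult_lt_compat_l with (r := M) in HN; auto.
    replace (M * (e / M)) with e in HN by (field; lra). exact HN.
Qed.

Theorem heine_borel lo hi : (forall i, open_E m (cover i)) ->
  (forall v, box lo hi v -> exists i, cover i v) -> finitely_covered (box lo hi).
Proof.
  intros Hop Hcov. apply NNPP. intro Hunc.
  destruct (halvings_common_point lo hi Hunc) as [z Hz].
  destruct (Hcov z) as [i0 Cz]; [exact (Hz O)|].
  destruct (Hop i0 z Cz) as [e [He Hball]].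
  set (M := fin_sum m (fun i => Rabs (hi i - lo i))).
  assert (HM : forall i, hi i - lo i <= M).
  { intro i. pose proof (fin_sum_ge_term m (fun i => Rabs (hi i - lo i)) i (fun j => Rabs_pos _)).
    pose proof (Rle_abs (hi i - lo i)). unfold M. cbv beta in *. lra. }
  destruct (eventually_geometric_lt M e He) as [N HN].
  apply (halvings_uncovered lo hi Hunc N). exists (i0 :: nil). intros v Hv.
  exists i0. split; [left; auto|]. apply Hball. intro i.
  specialize (Hv i). specialize (Hz N i). pose proof (halvings_width lo hi Hunc N i).
  assert ((hi i - lo i) * (/ 2) ^ N <= M * (/ 2) ^ N)
    by (apply Rmult_le_compat_r; [apply pow_le; lra|apply HM]).
  piecewise_lra.
Qed.
End HeineBorel.

Lemma eventually_forall_list (A : Type) (P : A -> nat -> Prop) (l : list A) :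
  (forall a, In a l -> exists N, forall n, (N <= n)%nat -> P a n) ->
  exists N, forall a, In a l -> forall n, (N <= n)%nat -> P a n.
Proof.
  induction l as [|a l IH]; intros H.
  - exists O. intros a [].
  - destruct (H a (or_introl eq_refl)) as [N1 H1].
    destruct IH as [N2 H2]. { intros b Hb. apply H; right; auto. }
    exists (max N1 N2). intros b [<-|Hb] n Hn.
    + apply H1. lia.
    + apply H2; auto. lia.
Qed.

Lemma finite_min_pos (J : nat) (f : nat -> R) : (forall k, (k < J)%nat -> 0 < f k) ->
  exists e, 0 < e /\ forall k, (k < J)%nat -> e <= f k.
Proof.
  induction J as [|J IH]; intros H.
  - exists 1. split; [lra|]. intros; lia.
  - destruct IH as [e [He He']]. { intros; apply H; lia. }
    exists (Rmin e (f J)). split; [apply Rmin_pos; auto|].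
    intros k Hk. destruct (Nat.eq_dec k J) as [->|h]; [apply Rmin_r|].
    pose proof (He' k ltac:(lia)). pose proof (Rmin_l e (f J)). lra.
Qed.

Section Metric.
Variable X : Type.
Variable d : X -> X -> R.
Hypothesis Hm : is_metric d.

Lemma dist_nonneg x y : 0 <= d x y. Proof. apply Hm. Qed.
Lemma dist_sym x y : d x y = d y x. Proof. apply Hm. Qed.
Lemma dist_triangle x y z : d x z <= d x y + d y z. Proof. apply Hm. Qed.
Lemma dist_refl x : d x x = 0. Proof. apply Hm; auto. Qed.
Lemma dist_eq0 x y : d x y = 0 -> x = y. Proof. apply Hm. Qed.

Lemma dist_pos x y : x <> y -> 0 < d x y.
Proof.
  intros Hxy. destruct (dist_nonneg x y) as [h|h]; auto.
  exfalso. apply Hxy, dist_eq0. auto.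
Qed.

Lemma is_open_ball z r : is_open d (fun y => d z y < r).
Proof.
  intros x Hx. exists (r - d z x). split; [lra|]. intros y Hy.
  pose proof (dist_triangle z x y). lra.
Qed.

Lemma is_closed_cball z r : is_closed d (fun y => d z y <= r).
Proof.
  intros x Hx. exists (d z x - r). split; [lra|]. intros y Hy Hy'.
  pose proof (dist_triangle z y x) as Htri. rewrite (dist_sym y x) in Htri. lra.
Qed.

Lemma closed_subset_compact K F :
  is_compact d K -> is_closed d F -> (forall y, F y -> K y) -> is_compact d F.
Proof.
  intros HK HF HFK I U HU Hcov.
  set (U' := fun (o : option I) y => match o with Some i => U i y | None => ~ F y end).
  destruct (HK (option I) U') as [l Hl].
  - intros [i|]; simpl; [apply HU|exact HF].
  - intros y Hy. destruct (classic (F y)) as [h|h].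
    + destruct (Hcov y h) as [i Hi]. exists (Some i); auto.
    + exists None; auto.
  - exists (flat_map (fun o => match o with Some i => i :: nil | None => nil end) l).
    intros y Hy. destruct (Hl y (HFK y Hy)) as [[i|] [Hin Hi]].
    + exists i. split; auto. apply in_flat_map. exists (Some i). simpl; auto.
    + simpl in Hi. contradiction.
Qed.

Lemma compact_chart_cube m (W : Eucl m -> Prop) (psi : Eucl m -> X) c A :
  open_E m W -> cont_from_E d m W psi -> (forall w, in_cube m c A w -> W w) ->
  is_compact d (fun y => exists w, in_cube m c A w /\ y = psi w).
Proof.
  intros HW Hpsi Hcube I U HU Hcov.
  set (lo := fun i => c i - A). set (hi := fun i => c i + A).
  assert (Hbox : forall w, box m lo hi w <-> in_cube m c A w).
  { intro w. unfold box, in_cube, lo, hi. split; intros Hw i; specialize (Hw i); piecewise_lra. }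
  set (O := fun i w => W w /\ U i (psi w)).
  destruct (heine_borel m I O lo hi) as [l Hl].
  - intros i w [Ww Uw]. destruct (HU i (psi w) Uw) as [e [He He']].
    destruct (Hpsi w Ww e He) as [e1 [He1 He1']].
    destruct (HW w Ww) as [e2 [He2 He2']].
    exists (Rmin e1 e2). split; [apply Rmin_pos; auto|]. intros w' Hw'.
    pose proof (Rmin_l e1 e2). pose proof (Rmin_r e1 e2).
    assert (W w') by (apply He2'; intro j; specialize (Hw' j); lra).
    split; auto. apply He', He1'; auto. intro j; specialize (Hw' j); lra.
  - intros v Hv. apply Hbox in Hv. destruct (Hcov (psi v)) as [i Hi]; eauto.
    exists i. split; auto.
  - exists l. intros y [w [Hw ->]]. destruct (Hl w (proj2 (Hbox w) Hw)) as [i [Hin [_ Hi]]]. eauto.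
Qed.

Lemma cauchy_compact_cvg (u : nat -> X) K N0 :
  (forall e, 0 < e -> exists N, forall p q, (N <= p)%nat -> (N <= q)%nat -> d (u p) (u q) < e) ->
  is_compact d K -> (forall p, (N0 <= p)%nat -> K (u p)) ->
  exists l, forall e, 0 < e -> exists N, forall p, (N <= p)%nat -> d (u p) l < e.
Proof.
  intros Hc HK HuK. apply NNPP. intro Hno.
  (* every point has a ball which the tail of [u] eventually leaves for good *)
  set (I := {z : X & {e : R | 0 < e /\ exists N, forall q, (N <= q)%nat -> e <= d (u q) z}}).
  set (U := fun (i : I) y => d (projT1 i) y < proj1_sig (projT2 i)).
  destruct (HK I U) as [l Hl].
  - intro i. apply is_open_ball.
  - intros z Hz.
    assert (exists e, 0 < e /\ forall N, exists p, (N <= p)%nat /\ e <= d (u p) z) as [e [He Hp]].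
    { apply NNPP. intro H. apply Hno. exists z. intros e He. apply NNPP. intro H2. apply H.
      exists e. split; auto. intro N. apply NNPP. intro H3. apply H2. exists N. intros p Hp.
      apply Rnot_le_lt. intro H4. apply H3. eauto. }
    destruct (Hc (e/2) ltac:(lra)) as [Nc HNc].
    destruct (Hp Nc) as [p [Hp1 Hp2]].
    assert (Hex : 0 < e / 2 /\ exists N, forall q, (N <= q)%nat -> e / 2 <= d (u q) z).
    { split; [lra|]. exists Nc. intros q Hq. specialize (HNc p q Hp1 Hq).
      pose proof (dist_triangle (u p) (u q) z). lra. }
    exists (existT _ z (exist _ (e/2) Hex)). unfold U. simpl. rewrite dist_refl. lra.
  - destruct (eventually_forall_list I (fun i q => proj1_sig (projT2 i) <= d (u q) (projT1 i)) l)
      as [N HN].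
    { intros [z [e [He [N HN]]]] _. exists N. simpl. auto. }
    destruct (Hl (u (max N N0)) (HuK _ (Nat.le_max_r _ _))) as [i [Hin Hi]].
    specialize (HN i Hin (max N N0) (Nat.le_max_l _ _)). unfold U in Hi.
    rewrite dist_sym in Hi. lra.
Qed.
Lemma radius_exists (f : X -> X) B p : (forall y, d y (f y) <= B) -> f p <> p ->
  exists r, radius d f r /\ 0 < r /\ r <= B.
Proof.
  intros HB Hp. assert (0 < d p (f p)) by (apply dist_pos; auto).
  destruct (completeness (fun t => exists x, t = d x (f x))) as [r Hr].
  - exists B. intros t [x ->]. apply HB.
  - exists (d p (f p)), p; reflexivity.
  - exists r. split; auto. split.
    + assert (d p (f p) <= r) by (apply (proj1 Hr); exists p; reflexivity). lra.
    + apply (proj2 Hr). intros t [x ->]. apply HB.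
Qed.
End Metric.

(** * Decreasing subsequences *)

Lemma eventually_div_succ_lt C x : 0 < x -> exists N, forall n, (N <= n)%nat -> C / (INR n + 1) < x.
Proof.
  intros Hx. destruct (INR_archimed x C Hx) as [N HN]. exists N. intros n Hn.
  apply le_INR in Hn. pose proof (pos_INR n).
  apply Rmult_lt_reg_r with (r := INR n + 1); [lra|].
  unfold Rdiv. rewrite Rmult_assoc, Rinv_l by lra. nra.
Qed.

Section DecreasingSubsequence.
Variable s : nat -> R.
Hypotheses (Hs_pos : forall k, 0 < s k) (Hs_cv : Un_cv s 0).

Lemma eventually_below x : exists N, 0 < x -> forall n, (N <= n)%nat -> s n < x.
Proof.
  destruct (Rlt_dec 0 x) as [Hx|Hx]; [|exists O; intros; lra].
  destruct (Hs_cv x Hx) as [N HN]. exists N. intros _ n Hn.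
  specialize (HN n Hn). unfold R_dist in HN. rewrite Rminus_0_r in HN. piecewise_lra.
Qed.

Definition below_index x := proj1_sig (constructive_indefinite_description _ (eventually_below x)).

(* each index lies beyond the point after which [s] stays below the previous term *)
Fixpoint decreasing_indices (k : nat) : nat :=
  match k with
  | O => O
  | S k' => max (S k') (below_index (s (decreasing_indices k')))
  end.

Lemma decreasing_indices_ge k : (k <= decreasing_indices k)%nat.
Proof. destruct k as [|k]; [lia|apply Nat.le_max_l]. Qed.

Lemma decreasing_subsequence :
  Un_decreasing (fun k => s (decreasing_indices k)) /\ Un_cv (fun k => s (decreasing_indices k)) 0.
Proof.
  split.
  - intro k. cbn [decreasing_indices]. left. unfold below_index.
    destruct (constructive_indefinite_description _ _) as [N HN]. cbn [proj1_sig].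
    apply HN; [apply Hs_pos|apply Nat.le_max_r].
  - intros e He. destruct (Hs_cv e He) as [N HN]. exists N. intros n Hn.
    apply HN. pose proof (decreasing_indices_ge n). lia.
Qed.
End DecreasingSubsequence.

Definition flexing_family {X : Type} (d : X -> X -> R) (Y : X -> Prop) (g : nat -> X -> X)
  (r : nat -> R) :=
  (forall k, homeo_bd d Y (g k)) /\ (forall k, radius d (g k) (r k)) /\
  Un_decreasing r /\ Un_cv r 0 /\ (forall k, r k <> 0).

(** * Transporting cube homeomorphisms through a chart *)

Definition cube_supported_lipschitz m (c : Eucl m) (a : R) (T : Eucl m -> Eucl m) :=
  (forall v, T v <> v -> in_open_cube m c a v) /\
  (forall v, in_cube m c a v -> in_cube m c a (T v)) /\
  exists L, 0 < L /\ forall v w e, 0 <= e -> (forall j, Rabs (v j - w j) <= e) ->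
     forall i, Rabs (T v i - T w i) <= L * e.

Lemma shear_cube_supported m i0 c a : 0 < a -> cube_supported_lipschitz m c a (shear m i0 c a).
Proof.
  intros Ha. split; [apply shear_support|split; [intros; apply shear_cube; auto; lra|]].
  exists (2 * (INR m + 1)). split; [pose proof (pos_INR m); lra|]. intros. apply shear_lipschitz; auto.
Qed.

Lemma unshear_cube_supported m i0 c a : 0 < a -> cube_supported_lipschitz m c a (unshear m i0 c a).
Proof.
  intros Ha. split; [apply unshear_support|split; [intros; apply unshear_cube; auto; lra|]].
  exists (3 * (INR m + 1)). split; [pose proof (pos_INR m); lra|]. intros. apply unshear_lipschitz; auto.
Qed.

Section Chart.
Variable X : Type.
Variable d : X -> X -> R.
Hypothesis Hm : is_metric d.
Variable m : nat.
Variables (V : X -> Prop) (W : Eucl m -> Prop) (phi : X -> Eucl m) (psi : Eucl m -> X).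
Hypotheses (HV : is_open d V) (HW : open_E m W) (Hphi : forall y, V y -> W (phi y))
  (Hpsi : forall w, W w -> V (psi w)) (Hpsi_phi : forall y, V y -> psi (phi y) = y)
  (Hphi_psi : forall w, W w -> phi (psi w) = w)
  (Hphi_cont : cont_to_E d m V phi) (Hpsi_cont : cont_from_E d m W psi).

Section Cube.
Variables (c : Eucl m) (A a : R).
Hypotheses (Ha : 0 < a) (HaA : a < A) (Hcube : forall w, in_cube m c A w -> W w).

Definition chart_cube : X -> Prop := fun y => exists w, in_cube m c A w /\ y = psi w.

Definition transport (T : Eucl m -> Eucl m) (y : X) : X :=
  if excluded_middle_informative (V y) then psi (T (phi y)) else y.

Lemma chart_cube_inv y : chart_cube y -> V y /\ in_cube m c A (phi y).
Proof. intros [w [Hw ->]]. split; [apply Hpsi; auto|]. rewrite Hphi_psi; auto. Qed.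

Lemma chart_cube_intro y : V y -> in_cube m c A (phi y) -> chart_cube y.
Proof. intros. exists (phi y). split; auto. rewrite Hpsi_phi; auto. Qed.

Lemma chart_cube_interior y :
  V y -> in_open_cube m c a (phi y) -> exists r, 0 < r /\ forall z, d y z < r -> chart_cube z.
Proof.
  intros Vy Hy. destruct (HV y Vy) as [e1 [He1 He1']].
  destruct (Hphi_cont y Vy (A - a) ltac:(lra)) as [e2 [He2 He2']].
  exists (Rmin e1 e2). split; [apply Rmin_pos; auto|]. intros z Hz.
  pose proof (Rmin_l e1 e2). pose proof (Rmin_r e1 e2).
  assert (Vz : V z) by (apply He1'; lra).
  apply chart_cube_intro; auto. intro i. specialize (He2' z Vz ltac:(lra) i). specialize (Hy i).
  piecewise_lra.
Qed.

Lemma transport_chart_cube T y : chart_cube y -> transport T y = psi (T (phi y)).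
Proof.
  intros HY. unfold transport. destruct (excluded_middle_informative (V y)); auto.
  exfalso. apply n, chart_cube_inv; auto.
Qed.

Section Supported.
Variable T : Eucl m -> Eucl m.
Hypothesis HT : cube_supported_lipschitz m c a T.

Lemma cube_supported_big_cube v : in_cube m c A v -> in_cube m c A (T v).
Proof.
  destruct HT as [Hs [Hb _]]. intros Hv. destruct (classic (T v = v)) as [->|Hne]; auto.
  pose proof (Hb v (in_open_cube_in_cube _ _ _ _ (Hs v Hne))) as Hv'.
  intro i. specialize (Hv' i). lra.
Qed.

Lemma transport_fixed y : ~ in_open_cube m c a (phi y) -> transport T y = y.
Proof.
  destruct HT as [Hs _]. intros H. unfold transport.
  destruct (excluded_middle_informative (V y)); auto.
  destruct (classic (T (phi y) = phi y)) as [->|Hne]; auto. exfalso. apply H, Hs; auto.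
Qed.

Lemma transport_maps_to y : chart_cube y -> chart_cube (transport T y).
Proof.
  intros HY. rewrite transport_chart_cube; auto. destruct (chart_cube_inv y HY) as [Vy Hy].
  exists (T (phi y)). split; auto. apply cube_supported_big_cube; auto.
Qed.

Lemma transport_outside y : ~ chart_cube y -> transport T y = y.
Proof.
  intros HY. destruct (classic (in_open_cube m c a (phi y))) as [h|h]; [|apply transport_fixed; auto].
  unfold transport. destruct (excluded_middle_informative (V y)) as [Vy|]; auto.
  exfalso. apply HY, chart_cube_intro; auto.
  intro i. specialize (h i). lra.
Qed.

Lemma transport_boundary y : rel_boundary d chart_cube y -> transport T y = y.
Proof.
  intros [HY Hcl]. apply transport_fixed. intros h.
  destruct (chart_cube_interior y (proj1 (chart_cube_inv y HY)) h) as [r [Hr Hr']].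
  destruct (Hcl r Hr) as [z [Hz Hdz]]. apply Hz, Hr'; auto.
Qed.

Lemma transport_cont : cont_on d chart_cube (transport T).
Proof.
  intros y HY e He. pose proof HT as [_ [_ [L [HL HLip]]]].
  destruct (chart_cube_inv y HY) as [Vy Hy].
  destruct (Hpsi_cont (T (phi y)) (Hcube _ (cube_supported_big_cube _ Hy)) e He) as [e1 [He1 He1']].
  destruct (Hphi_cont y Vy (e1 / (2 * L))) as [e2 [He2 He2']]; [apply Rdiv_lt_0_compat; lra|].
  exists e2. split; auto. intros z HZ Hz. rewrite !transport_chart_cube; auto.
  destruct (chart_cube_inv z HZ) as [Vz Hz'].
  apply He1'; [apply Hcube, cube_supported_big_cube; auto|].
  intro i. rewrite Rabs_minus_sym. eapply Rle_lt_trans.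
  - apply (HLip (phi y) (phi z) (e1 / (2 * L))).
    + left. apply Rdiv_lt_0_compat; lra.
    + intro j. rewrite Rabs_minus_sym. left. apply He2'; auto.
  - replace (L * (e1 / (2 * L))) with (e1 / 2) by (field; lra). lra.
Qed.

(* a moved point and its image both lie in the image of the [a]-cube, within
   [eta] of [p] *)
Lemma transport_radius p eta : V p -> phi p = c -> T c <> c ->
  (forall w, in_cube m c a w -> d p (psi w) < eta) ->
  exists r, radius d (transport T) r /\ 0 < r /\ r <= 2 * eta.
Proof.
  intros Vp Hpc HTc Heta. pose proof HT as [_ [Hb _]].
  assert (Hc : in_cube m c a c). { intro i. rewrite Rminus_diag, Rabs_R0. lra. }
  assert (Heta0 : 0 <= eta) by (pose proof (Heta c Hc); pose proof (dist_nonneg X d Hm p (psi c)); lra).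
  apply (radius_exists X d Hm _ _ p).
  - intro y. destruct (classic (in_open_cube m c a (phi y))) as [h|h];
      [|rewrite transport_fixed, (dist_refl X d Hm); auto; lra].
    unfold transport. destruct (excluded_middle_informative (V y)) as [Vy|];
      [|rewrite (dist_refl X d Hm); lra].
    pose proof (dist_triangle X d Hm y p (psi (T (phi y)))).
    pose proof (Heta _ (in_open_cube_in_cube _ _ _ _ h)) as Hy. rewrite Hpsi_phi in Hy by auto.
    pose proof (Heta _ (Hb _ (in_open_cube_in_cube _ _ _ _ h))).
    rewrite (dist_sym X d Hm y p) in *. lra.
  - unfold transport. destruct (excluded_middle_informative (V p)) as [_|]; [|contradiction].
    rewrite Hpc. intro E. apply HTc.
    assert (W (T c)) by (apply Hcube; intro i; specialize (Hb c Hc i); lra).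
    rewrite <- (Hphi_psi (T c)), E by auto. exact Hpc.
Qed.
End Supported.

Lemma transport_homeo_bd T T' :
  cube_supported_lipschitz m c a T -> cube_supported_lipschitz m c a T' ->
  (forall v, T' (T v) = v) -> (forall v, T (T' v) = v) ->
  homeo_bd d chart_cube (transport T).
Proof.
  intros HT HT' HTT' HT'T.
  assert (Hinv : forall T T', cube_supported_lipschitz m c a T -> cube_supported_lipschitz m c a T' ->
    (forall v, T' (T v) = v) -> forall y, chart_cube y -> transport T' (transport T y) = y).
  { clear T T' HT HT' HTT' HT'T. intros T T' HT HT' HTT' y Hy.
    destruct (chart_cube_inv y Hy) as [Vy Hy'].
    rewrite (transport_chart_cube T y Hy).
    rewrite transport_chart_cube;
      [|rewrite <- transport_chart_cube with (T := T); auto; apply transport_maps_to; auto].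
    rewrite Hphi_psi, HTT'; [apply Hpsi_phi; auto|]. apply Hcube, cube_supported_big_cube; auto. }
  split; [|split; [|split]].
  - intros y Hy. apply transport_outside; auto.
  - intros y Hy. apply transport_maps_to; auto.
  - exists (transport T'). repeat split.
    + intros y Hy. apply transport_maps_to; auto.
    + intros y Hy. apply Hinv; auto.
    + intros y Hy. apply Hinv; auto.
    + apply transport_cont; auto.
    + apply transport_cont; auto.
  - intros y Hy. apply transport_boundary; auto.
Qed.
End Cube.

Section AtPoint.
Variable p : X.
Hypothesis Vp : V p.

Lemma chart_small_cube eps : 0 < eps ->
  exists A, 0 < A /\ forall w, in_cube m (phi p) A w -> W w /\ d p (psi w) < eps.
Proof.
  intros Heps. destruct (HW (phi p) (Hphi p Vp)) as [e1 [He1 He1']].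
  destruct (Hpsi_cont (phi p) (Hphi p Vp) eps Heps) as [e2 [He2 He2']].
  exists (Rmin e1 e2 / 2). split; [pose proof (Rmin_pos e1 e2 He1 He2); lra|].
  intros w Hw. pose proof (Rmin_l e1 e2). pose proof (Rmin_r e1 e2).
  assert (Ww : W w) by (apply He1'; intro i; specialize (Hw i); lra).
  split; auto. rewrite <- (Hpsi_phi p Vp) at 1. apply He2'; auto.
  intro i; specialize (Hw i); lra.
Qed.

Lemma chart_cube_flexing_family (i0 : Fin.t m) A : 0 < A -> (forall w, in_cube m (phi p) A w -> W w) ->
  exists g r, flexing_family d (chart_cube (phi p) A) g r.
Proof.
  intros HA HAW. set (c := phi p).
  assert (Hak : forall k : nat, exists a, (0 < a < A) /\
    forall w, in_cube m c a w -> d p (psi w) < 1 / (INR k + 1)).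
  { intro k. destruct (chart_small_cube (1 / (INR k + 1))) as [B [HB HB']].
    { pose proof (pos_INR k). apply Rdiv_lt_0_compat; lra. }
    pose proof (Rmin_pos A B HA HB). pose proof (Rmin_l A B). pose proof (Rmin_r A B).
    exists (Rmin A B / 2). split; [lra|]. intros w Hw. apply HB'.
    intro i. specialize (Hw i). unfold c in Hw. lra. }
  destruct (choice _ Hak) as [a Ha].
  set (g k := transport (shear m i0 c (a k))).
  assert (Hs : forall k, exists s, radius d (g k) s /\ 0 < s <= 2 * (1 / (INR k + 1))).
  { intro k. destruct (Ha k) as [[Ha1 Ha2] Ha3].
    apply (transport_radius c A (a k) Ha1 Ha2 HAW _ (shear_cube_supported m i0 c (a k) Ha1) p);
      auto using shear_moves_centre. }
  destruct (choice _ Hs) as [s Hs'].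
  assert (Hs_cv : Un_cv s 0).
  { intros e He. destruct (eventually_div_succ_lt 2 e He) as [N HN]. exists N. intros n Hn.
    specialize (HN n Hn). specialize (Hs' n). unfold R_dist. rewrite Rminus_0_r. piecewise_lra. }
  destruct (decreasing_subsequence s (fun k => proj1 (proj2 (Hs' k))) Hs_cv) as [Hdec Hcv].
  set (sigma := decreasing_indices s Hs_cv) in *.
  exists (fun k => g (sigma k)), (fun k => s (sigma k)).
  split; [|split; [|split; [|split]]]; auto.
  - intro k. destruct (Ha (sigma k)) as [[Ha1 Ha2] _].
    apply (transport_homeo_bd c A _ Ha1 Ha2 HAW _ (unshear m i0 c (a (sigma k))));
      auto using shear_cube_supported, unshear_cube_supported, shearK, unshearK.
  - intro k. apply Hs'.
  - intro k. pose proof (proj1 (proj2 (Hs' (sigma k)))). lra.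
Qed.
End AtPoint.
End Chart.

Lemma manifold_local_flexibility X (d : X -> X -> R) (A : X -> Prop) p eps :
  is_metric d -> manifold_pos d A -> A p -> 0 < eps ->
  exists Y : X -> Prop, (forall y, Y y -> A y) /\ is_compact d Y /\ (forall y, Y y -> d p y < eps) /\
    exists g r, flexing_family d Y g r.
Proof.
  intros Hm [m [Hm1 Hloc]] Ap Heps.
  destruct (Hloc p Ap)
    as [V [W [phi [psi [HV [Vp [VA [HW [Hphi [Hpsi [Hpp [Hqq [Hcphi Hcpsi]]]]]]]]]]]]].
  destruct m as [|m]; [lia|].
  destruct (chart_small_cube X d (S m) V W phi psi HW Hphi Hpp Hcpsi p Vp eps Heps)
    as [A0 [HA0 HA0']].
  exists (chart_cube X (S m) psi (phi p) A0). split; [|split; [|split]].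
  - intros y [w [Hw ->]]. apply VA, Hpsi, HA0'; auto.
  - apply (compact_chart_cube X d (S m) W); auto. intros w Hw. apply HA0'; auto.
  - intros y [w [Hw ->]]. apply HA0'; auto.
  - apply (chart_cube_flexing_family X d Hm (S m) V W phi psi HV HW Hphi Hpsi Hpp Hqq Hcphi Hcpsi
      p Vp Fin.F1 A0 HA0). intros w Hw. apply HA0'; auto.
Qed.

(** * Flexibility from a closed discrete sequence of manifold points *)

Section ClosedDiscrete.
Variable X : Type.
Variable d : X -> X -> R.
Hypothesis Hm : is_metric d.
Variable x : nat -> X.
Hypothesis Hx : closed_discrete_seq d x.

Lemma closed_discrete_not_compact : ~ is_compact d (fun _ => True).
Proof.
  destruct Hx as [_ [Hcl Hiso]]. intro HK.
  set (I := option {n : nat & {e : R | 0 < e /\ forall k, d (x n) (x k) < e -> k = n}}).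
  set (U := fun (i : I) y => match i with
            | None => ~ (exists n, x n = y)
            | Some t => d (x (projT1 t)) y < proj1_sig (projT2 t) end).
  destruct (HK I U) as [l Hl].
  - intros [t|]; simpl; [apply is_open_ball; auto|exact Hcl].
  - intros y _. destruct (classic (exists n, x n = y)) as [[n <-]|h].
    + destruct (Hiso n) as [e [He He']]. exists (Some (existT _ n (exist _ e (conj He He')))).
      simpl. rewrite (dist_refl X d Hm). auto.
    + exists None. simpl. auto.
  - destruct (eventually_forall_list I (fun i n => ~ U i (x n)) l) as [N HN].
    + intros [[n0 [e [He He']]]|] _.
      * exists (S n0). intros n Hn Hu. simpl in Hu. specialize (He' n Hu). lia.
      * exists O. intros n _ Hu. simpl in Hu. apply Hu. eauto.
    + destruct (Hl (x N) Logic.I) as [i [Hin Hi]]. apply (HN i Hin N (le_n _)); auto.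
Qed.

(* each point has a ball of radius [2 e] meeting the sequence at most at one
   index; [K] is covered by finitely many of the concentric [e]-balls *)
Lemma closed_discrete_locally_finite (Y : nat -> X -> Prop) :
  (forall n y, Y n y -> d (x n) y < 1 / (INR n + 1)) ->
  forall K, is_compact d K -> exists N, forall n, (N <= n)%nat -> forall y, K y -> ~ Y n y.
Proof.
  intros HY K HK. destruct Hx as [_ [Hcl Hiso]].
  set (I := {z : X & {pr : R * nat | 0 < fst pr /\ forall k, d z (x k) < 2 * fst pr -> k = snd pr}}).
  set (U := fun (i : I) y => d (projT1 i) y < fst (proj1_sig (projT2 i))).
  destruct (HK I U) as [l Hl].
  - intro i. apply is_open_ball; auto.
  - intros z _. destruct (classic (exists j, x j = z)) as [[j <-]|h].
    + destruct (Hiso j) as [e [He He']].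
      assert (P : 0 < fst (e/2, j) /\ forall k, d (x j) (x k) < 2 * fst (e/2, j) -> k = snd (e/2, j)).
      { simpl. split; [lra|]. intros k Hk. apply He'. lra. }
      exists (existT _ (x j) (exist _ (e/2, j) P)). unfold U; simpl. rewrite (dist_refl X d Hm). lra.
    + destruct (Hcl z h) as [e [He He']].
      assert (P : 0 < fst (e/2, O) /\ forall k, d z (x k) < 2 * fst (e/2, O) -> k = snd (e/2, O)).
      { simpl. split; [lra|]. intros k Hk. exfalso. apply (He' (x k)); [lra|eauto]. }
      exists (existT _ z (exist _ (e/2, O) P)). unfold U; simpl. rewrite (dist_refl X d Hm). lra.
  - destruct (eventually_forall_list I (fun i n => n <> snd (proj1_sig (projT2 i)) /\
        1 / (INR n + 1) < fst (proj1_sig (projT2 i))) l) as [N HN].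
    + intros [z [[e j] [He He']]] _. simpl in *.
      destruct (eventually_div_succ_lt 1 e He) as [N1 HN1].
      exists (max N1 (S j)). intros n Hn. split; [lia|]. apply HN1. lia.
    + exists N. intros n Hn y Ky Yy. destruct (Hl y Ky) as [i [Hin Hi]].
      destruct (HN i Hin n Hn) as [H1 H2]. unfold U in Hi.
      destruct i as [z [[e j] [He He']]]. simpl in *.
      apply H1, He'. pose proof (HY n y Yy). pose proof (dist_triangle X d Hm z y (x n)) as Htri.
      rewrite (dist_sym X d Hm y (x n)) in Htri. lra.
Qed.
End ClosedDiscrete.

Theorem flexible_of_manifold_neighbourhoods (X : Type) (d : X -> X -> R) :
  is_metric d -> locally_compact d -> polish d ->
  forall (x : nat -> X) (U : nat -> X -> Prop),
    closed_discrete_seq d x ->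
    (forall n, is_open d (U n) /\ U n (x n) /\ manifold_pos d (U n)) ->
    (forall n k, n <> k -> forall y, U n y -> ~ U k y) ->
    flexible d.
Proof.
  intros Hm Hlc Hpol x U Hx HU Hdis.
  assert (Hloc : forall n, exists Y : X -> Prop,
    (forall y, Y y -> U n y) /\ is_compact d Y /\ (forall y, Y y -> d (x n) y < 1 / (INR n + 1)) /\
    exists gr : (nat -> X -> X) * (nat -> R), flexing_family d Y (fst gr) (snd gr)).
  { intro n. destruct (HU n) as [_ [Hxn Hman]].
    destruct (manifold_local_flexibility X d (U n) (x n) (1 / (INR n + 1)) Hm Hman Hxn)
      as [Y [HYU [HYc [HYx [g [r Hgr]]]]]].
    { pose proof (pos_INR n). apply Rdiv_lt_0_compat; lra. }
    exists Y. repeat split; auto. exists (g, r). auto. }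
  destruct (choice _ Hloc) as [Y HY].
  destruct (choice _ (fun n => proj2 (proj2 (proj2 (HY n))))) as [gr Hgr].
  split; [exact Hlc|split; [apply (closed_discrete_not_compact X d Hm x Hx)|split; [exact Hpol|]]].
  exists Y, (fun n => fst (gr n)), (fun n => snd (gr n)).
  split; [|split; [|split; [|split; [|split; [|split]]]]].
  - intros n k Hnk y H1 H2. apply (Hdis n k Hnk y); apply HY; auto.
  - intro n. apply HY.
  - apply (closed_discrete_locally_finite X d Hm x Hx). intros n. apply HY.
  - intros n. apply Hgr.
  - intros n. apply Hgr.
  - intros n. split; apply Hgr.
  - intros n. apply Hgr.
Qed.

(** * Second-countable manifolds *)

Section Manifold.
Variable X : Type.
Variable d : X -> X -> R.
Hypothesis Hm : is_metric d.

Lemma manifold_locally_compact : manifold_pos d (fun _ => True) -> locally_compact d.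
Proof.
  intros [m [Hm1 Hloc]] x.
  destruct (Hloc x Logic.I)
    as [V [W [phi [psi [HV [Vx [_ [HW [Hphi [Hpsi [Hpp [Hqq [Hcphi Hcpsi]]]]]]]]]]]]].
  destruct (HW (phi x) (Hphi x Vx)) as [e [He He']].
  assert (Hcube : forall w, in_cube m (phi x) (e / 2) w -> W w).
  { intros w Hw. apply He'. intro i. specialize (Hw i). lra. }
  set (K := chart_cube X m psi (phi x) (e / 2)).
  exists (fun y => exists r, 0 < r /\ forall z, d y z < r -> K z), K. split; [|split; [|split]].
  - intros y [r [Hr Hr']]. exists (r / 2). split; [lra|]. intros z Hz. exists (r / 2). split; [lra|].
    intros w Hw. apply Hr'. pose proof (dist_triangle X d Hm y z w). lra.
  - apply (chart_cube_interior X d m V phi psi HV Hpp Hcphi (phi x) (e / 2) (e / 4)); auto; try lra.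
    intro i. rewrite Rminus_diag, Rabs_R0. lra.
  - apply (compact_chart_cube X d m W); auto.
  - intros y [r [Hr Hr']]. apply Hr'. rewrite (dist_refl X d Hm). auto.
Qed.

Lemma manifold_open_subset A O :
  manifold_pos d A -> is_open d O -> (forall y, O y -> A y) -> manifold_pos d O.
Proof.
  intros [m [Hm1 Hloc]] HO HOA. exists m. split; auto. intros y Oy.
  destruct (Hloc y (HOA y Oy))
    as [V [W [phi [psi [HV [Vy [VA [HW [Hphi [Hpsi [Hpp [Hqq [Hcphi Hcpsi]]]]]]]]]]]]].
  exists (fun z => V z /\ O z), (fun w => W w /\ O (psi w)), phi, psi.
  split; [|split; [|split; [|split; [|split; [|split; [|split; [|split; [|split]]]]]]]].
  - intros z [Vz Oz]. destruct (HV z Vz) as [e1 [He1 He1']]. destruct (HO z Oz) as [e2 [He2 He2']].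
    exists (Rmin e1 e2). split; [apply Rmin_pos; auto|]. intros w Hw.
    pose proof (Rmin_l e1 e2); pose proof (Rmin_r e1 e2). split; [apply He1'|apply He2']; lra.
  - auto.
  - intros z [_ Oz]; auto.
  - intros w [Ww Ow]. destruct (HO _ Ow) as [e [He He']].
    destruct (Hcpsi w Ww e He) as [e1 [He1 He1']].
    destruct (HW w Ww) as [e2 [He2 He2']].
    exists (Rmin e1 e2). split; [apply Rmin_pos; auto|]. intros w' Hw'.
    pose proof (Rmin_l e1 e2); pose proof (Rmin_r e1 e2).
    assert (W w') by (apply He2'; intro i; specialize (Hw' i); lra).
    split; auto. apply He', He1'; auto. intro i; specialize (Hw' i); lra.
  - intros z [Vz Oz]. split; auto. rewrite Hpp; auto.
  - intros w [Ww Ow]. split; auto.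
  - intros z [Vz _]. auto.
  - intros w [Ww _]. auto.
  - intros z [Vz _] e He. destruct (Hcphi z Vz e He) as [dl [Hdl Hdl']]. exists dl. split; auto.
    intros z' [Vz' _]. auto.
  - intros w [Ww _] e He. destruct (Hcpsi w Ww e He) as [dl [Hdl Hdl']]. exists dl. split; auto.
    intros w' [Ww' _]. auto.
Qed.

(* a point of each nonempty basic open set; the empty ones get [x0] *)
Lemma second_countable_separable (x0 : X) : second_countable d -> separable d.
Proof.
  intros [B [HBo HB]].
  assert (Hpt : forall n, exists y, (exists z, B n z) -> B n y).
  { intro n. destruct (classic (exists z, B n z)) as [[z Hz]|h]; [exists z|exists x0]; tauto. }
  destruct (choice _ Hpt) as [pt Hpt'].
  set (D := fun y => exists n, y = pt n).
  assert (Hg : forall y, exists n, D y -> y = pt n).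
  { intro y. destruct (classic (D y)) as [[n Hn]|h]; [exists n|exists O]; tauto. }
  destruct (choice _ Hg) as [g Hg'].
  exists D, g. split.
  - intros y z Hy Hz E. rewrite (Hg' y Hy), (Hg' z Hz), E. auto.
  - intros y e He. destruct (HB (fun z => d y z < e) (is_open_ball X d Hm y e) y) as [n [Bn Hn]].
    { rewrite (dist_refl X d Hm). auto. }
    exists (pt n). split; [exists n; auto|]. apply Hn, Hpt'. eauto.
Qed.
End Manifold.

(** * A complete metric on a locally compact space *)

Lemma Rinv_cont_pt a e : 0 < a -> 0 < e ->
  exists t, 0 < t /\ forall b, Rabs (a - b) < t -> Rabs (/ a - / b) < e.
Proof.
  intros Ha He. exists (Rmin (a / 2) (e * a * a / 4)).
  split; [apply Rmin_pos; [lra|]; apply Rdiv_lt_0_compat; [|lra]; repeat apply Rmult_lt_0_compat; lra|].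
  intros b Hb. pose proof (Rmin_l (a / 2) (e * a * a / 4)). pose proof (Rmin_r (a / 2) (e * a * a / 4)).
  assert (Hb0 : a / 2 < b) by piecewise_lra.
  replace (/ a - / b) with ((b - a) * / (a * b)) by (field; lra).
  rewrite Rabs_mult, Rabs_inv, (Rabs_pos_eq (a * b)) by nra.
  rewrite Rabs_minus_sym.
  apply Rmult_lt_reg_r with (r := a * b); [nra|].
  rewrite Rmult_assoc, Rinv_l by nra. rewrite Rmult_1_r.
  assert (0 < e * a) by nra. assert (e * a * a / 4 <= e * (a * b)) by nra. lra.
Qed.

Section CompleteMetric.
Variable X : Type.
Variable d : X -> X -> R.
Hypothesis Hm : is_metric d.
Hypothesis Hlc : locally_compact d.

Definition compact_ball_radii x := fun t => 0 < t <= 1 /\ is_compact d (fun y => d x y <= t).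

Lemma compact_ball_radii_nonempty x : exists t, compact_ball_radii x t.
Proof.
  destruct (Hlc x) as [V [K [HV [Vx [HK HVK]]]]].
  destruct (HV x Vx) as [e [He He']].
  exists (Rmin (e / 2) 1). split.
  - split; [apply Rmin_pos; lra|apply Rmin_r].
  - apply (closed_subset_compact X d K); auto.
    + apply is_closed_cball; auto.
    + intros y Hy. apply HVK, He'. pose proof (Rmin_l (e / 2) 1). lra.
Qed.

Lemma compact_radius_ex x : exists l, is_lub (compact_ball_radii x) l.
Proof.
  destruct (completeness (compact_ball_radii x)) as [l Hl].
  - exists 1. intros t [[_ h] _]; auto.
  - apply compact_ball_radii_nonempty.
  - eauto.
Qed.

Definition compact_radius x := proj1_sig (constructive_indefinite_description _ (compact_radius_ex x)).

Lemma compact_radius_lub x : is_lub (compact_ball_radii x) (compact_radius x).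
Proof. unfold compact_radius. destruct (constructive_indefinite_description _ _); auto. Qed.

Lemma compact_radius_pos x : 0 < compact_radius x.
Proof.
  destruct (compact_ball_radii_nonempty x) as [t Ht].
  pose proof (proj1 (compact_radius_lub x) t Ht). destruct Ht; lra.
Qed.

Lemma compact_ball_lt_radius x t : t < compact_radius x -> is_compact d (fun y => d x y <= t).
Proof.
  intros Ht. destruct (classic (exists s, compact_ball_radii x s /\ t < s)) as [[s [[_ Hs] Hts]]|H].
  - apply (closed_subset_compact X d _ _ Hs); [apply is_closed_cball; auto|].
    intros y Hy; lra.
  - exfalso. assert (compact_radius x <= t).
    { apply (proj2 (compact_radius_lub x)). intros s Hs. apply Rnot_lt_le. intro. apply H; eauto. }
    lra.
Qed.

Lemma compact_radius_le x y : compact_radius x <= compact_radius y + d x y.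
Proof.
  apply (proj2 (compact_radius_lub x)). intros s [[Hs0 Hs1] Hs].
  pose proof (compact_radius_pos y).
  destruct (Rle_dec s (d x y)); [lra|].
  assert (Hy : compact_ball_radii y (s - d x y)).
  { split; [split; [lra|pose proof (dist_nonneg X d Hm x y); lra]|].
    apply (closed_subset_compact X d _ _ Hs); [apply is_closed_cball; auto|].
    intros z Hz. pose proof (dist_triangle X d Hm x y z). lra. }
  pose proof (proj1 (compact_radius_lub y) _ Hy). lra.
Qed.

Lemma compact_radius_lipschitz x y : Rabs (compact_radius x - compact_radius y) <= d x y.
Proof.
  pose proof (compact_radius_le x y). pose proof (compact_radius_le y x).
  rewrite (dist_sym X d Hm y x) in *. piecewise_lra.
Qed.

Lemma inv_compact_radius_cont x e : 0 < e ->
  exists t, 0 < t /\ forall y, d x y < t -> Rabs (/ compact_radius x - / compact_radius y) < e.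
Proof.
  intros He. destruct (Rinv_cont_pt (compact_radius x) e (compact_radius_pos x) He) as [t [Ht Ht']].
  exists t. split; auto. intros y Hy. apply Ht'. pose proof (compact_radius_lipschitz x y). lra.
Qed.

(* the extra term blows up near the "boundary at infinity", so that a Cauchy
   sequence for [complete_dist] stays in a compact ball *)
Definition complete_dist x y := d x y + Rabs (/ compact_radius x - / compact_radius y).

Lemma complete_dist_metric : is_metric complete_dist.
Proof.
  unfold complete_dist. split; [|split; [|split]].
  - intros x y. pose proof (dist_nonneg X d Hm x y).
    pose proof (Rabs_pos (/ compact_radius x - / compact_radius y)). lra.
  - intros x y. split.
    + intros H. pose proof (dist_nonneg X d Hm x y).
      pose proof (Rabs_pos (/ compact_radius x - / compact_radius y)).
      apply (dist_eq0 X d Hm). lra.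
    + intros ->. rewrite (dist_refl X d Hm), Rminus_diag, Rabs_R0. lra.
  - intros x y. rewrite (dist_sym X d Hm), Rabs_minus_sym. auto.
  - intros x y z. pose proof (dist_triangle X d Hm x y z).
    pose proof (Rabs_triang (/ compact_radius x - / compact_radius y)
      (/ compact_radius y - / compact_radius z)) as Htri.
    replace (/ compact_radius x - / compact_radius y + (/ compact_radius y - / compact_radius z))
      with (/ compact_radius x - / compact_radius z) in Htri by ring. lra.
Qed.

Lemma complete_dist_same_topology : same_topology d complete_dist.
Proof.
  intros U. split.
  - intros HU x Ux. destruct (HU x Ux) as [e [He He']]. exists e. split; auto.
    intros y Hy. apply He'. unfold complete_dist in Hy.
    pose proof (Rabs_pos (/ compact_radius x - / compact_radius y)). lra.
  - intros HU x Ux. destruct (HU x Ux) as [e [He He']].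
    destruct (inv_compact_radius_cont x (e / 2)) as [t [Ht Ht']]; [lra|].
    exists (Rmin t (e / 2)). split; [apply Rmin_pos; lra|].
    intros y Hy. apply He'. unfold complete_dist.
    pose proof (Rmin_l t (e / 2)). pose proof (Rmin_r t (e / 2)).
    pose proof (Ht' y ltac:(lra)). lra.
Qed.

Lemma complete_dist_complete : complete complete_dist.
Proof.
  intros u Hc.
  assert (Hcd : forall e, 0 < e ->
    exists N, forall p q, (N <= p)%nat -> (N <= q)%nat -> d (u p) (u q) < e).
  { intros e He. destruct (Hc e He) as [N HN]. exists N. intros p q Hp Hq. specialize (HN p q Hp Hq).
    unfold complete_dist in HN. pose proof (Rabs_pos (/ compact_radius (u p) - / compact_radius (u q))).
    lra. }
  destruct (Hc 1 ltac:(lra)) as [N1 HN1].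
  set (M := / compact_radius (u N1) + 1).
  assert (HM : 0 < M).
  { unfold M. pose proof (Rinv_0_lt_compat _ (compact_radius_pos (u N1))). lra. }
  assert (Hl : forall p, (N1 <= p)%nat -> / M < compact_radius (u p)).
  { intros p Hp. specialize (HN1 p N1 Hp (le_n _)). unfold complete_dist in HN1.
    pose proof (dist_nonneg X d Hm (u p) (u N1)). pose proof (compact_radius_pos (u p)).
    assert (/ compact_radius (u p) < M) by (unfold M; piecewise_lra).
    rewrite <- (Rinv_inv (compact_radius (u p))). apply Rinv_lt_contravar; auto.
    apply Rmult_lt_0_compat; auto. apply Rinv_0_lt_compat; auto. }
  destruct (Hcd (/ M / 2)) as [N2 HN2]; [apply Rdiv_lt_0_compat; [apply Rinv_0_lt_compat|]; lra|].
  set (N3 := max N1 N2).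
  destruct (cauchy_compact_cvg X d Hm u (fun y => d (u N3) y <= / M / 2) N3 Hcd) as [l Hlim].
  - apply compact_ball_lt_radius. specialize (Hl N3 (Nat.le_max_l _ _)).
    pose proof (Rinv_0_lt_compat _ HM). lra.
  - intros p Hp. rewrite (dist_sym X d Hm). left. apply HN2; lia.
  - exists l. intros e He. destruct (inv_compact_radius_cont l (e / 2)) as [t [Ht Ht']]; [lra|].
    destruct (Hlim (Rmin t (e / 2))) as [N HN]; [apply Rmin_pos; lra|].
    exists N. intros p Hp. specialize (HN p Hp). unfold complete_dist.
    pose proof (Rmin_l t (e / 2)). pose proof (Rmin_r t (e / 2)).
    rewrite (dist_sym X d Hm) in HN. pose proof (Ht' (u p) ltac:(lra)) as Hinv.
    rewrite Rabs_minus_sym in Hinv. rewrite (dist_sym X d Hm). lra.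
Qed.

Lemma locally_compact_completely_metrizable :
  exists d' : X -> X -> R, is_metric d' /\ same_topology d d' /\ complete d'.
Proof.
  exists complete_dist.
  split; [apply complete_dist_metric|split; [apply complete_dist_same_topology|apply complete_dist_complete]].
Qed.
End CompleteMetric.

(** * Closed discrete sequences in noncompact second-countable spaces *)

Section EscapingSequence.
Variable X : Type.
Variable d : X -> X -> R.
Hypothesis Hm : is_metric d.
Variable V : nat -> X -> Prop.
Hypothesis HV : forall n, is_open d (V n).
Variable cover_index : X -> nat.
Hypothesis Hcover : forall y, V (cover_index y) y.
Variable escape : nat -> X.
Hypothesis Hescape : forall N n, (n <= N)%nat -> ~ V n (escape N).

(* the [k+1]-st term escapes every [V n] containing an earlier term *)
Fixpoint escape_level (k : nat) : nat :=
  match k with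
  | O => O
  | S k' => S (max (escape_level k') (cover_index (escape (escape_level k'))))
  end.

Definition escaping_seq k := escape (escape_level k).

Lemma escape_level_ge k : (k <= escape_level k)%nat.
Proof. induction k; simpl; lia. Qed.

Lemma escape_level_index j k : (j < k)%nat -> (cover_index (escaping_seq j) < escape_level k)%nat.
Proof. induction 1; cbn [escape_level]; unfold escaping_seq in *; lia. Qed.

Lemma escaping_seq_neq j k : (j < k)%nat -> escaping_seq j <> escaping_seq k.
Proof.
  intros H E. apply (Hescape (escape_level k) (cover_index (escaping_seq j)));
    [pose proof (escape_level_index j k H); lia|].
  fold (escaping_seq k). rewrite <- E. apply Hcover.
Qed.

Lemma escaping_seq_leaves z k : (cover_index z <= k)%nat -> ~ V (cover_index z) (escaping_seq k).
Proof. intros H. apply Hescape. pose proof (escape_level_ge k). lia. Qed.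

(* only the first [cover_index z] terms can enter the neighbourhood [V (cover_index z)] of [z] *)
Lemma escaping_seq_isolated z : exists e, 0 < e /\
  forall k, d z (escaping_seq k) < e -> z = escaping_seq k /\ (k < cover_index z)%nat.
Proof.
  destruct (HV (cover_index z) z (Hcover z)) as [e0 [He0 He0']].
  destruct (finite_min_pos (cover_index z)
    (fun k => if excluded_middle_informative (z = escaping_seq k) then 1 else d z (escaping_seq k)))
    as [e [He He']].
  { intros k Hk. destruct (excluded_middle_informative _); [lra|]. apply (dist_pos X d Hm); auto. }
  exists (Rmin e0 e). split; [apply Rmin_pos; auto|]. intros k Hk.
  pose proof (Rmin_l e0 e); pose proof (Rmin_r e0 e).
  destruct (Nat.lt_ge_cases k (cover_index z)) as [h|h].
  - specialize (He' k h). destruct (excluded_middle_informative _); [auto|lra].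
  - exfalso. apply (escaping_seq_leaves z k h). apply He0'. lra.
Qed.

Lemma escaping_seq_closed_discrete : closed_discrete_seq d escaping_seq.
Proof.
  split; [|split].
  - intros n k E. destruct (Nat.lt_trichotomy n k) as [h|[h|h]]; auto; exfalso.
    + apply (escaping_seq_neq n k h E).
    + apply (escaping_seq_neq k n h); auto.
  - intros z Hz. destruct (escaping_seq_isolated z) as [e [He He']].
    exists e. split; auto. intros y Hy [k <-]. apply Hz. exists k. symmetry. apply (He' k Hy).
  - intro n. destruct (escaping_seq_isolated (escaping_seq n)) as [e [He He']].
    exists e. split; auto. intros k Hk. destruct (He' k Hk) as [E _].
    destruct (Nat.lt_trichotomy n k) as [h|[h|h]]; auto; exfalso.
    + apply (escaping_seq_neq n k h E).
    + apply (escaping_seq_neq k n h); auto.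
Qed.
End EscapingSequence.

Lemma countable_cover_no_finite_subcover X (d : X -> X -> R) :
  second_countable d -> ~ is_compact d (fun _ => True) ->
  exists V : nat -> X -> Prop, (forall n, is_open d (V n)) /\ (forall y, exists n, V n y) /\
    (forall N, exists y, forall n, (n <= N)%nat -> ~ V n y).
Proof.
  intros [B [HBo HB]] Hnc.
  assert (exists (I : Type) (U : I -> X -> Prop), (forall i, is_open d (U i)) /\ (forall y, exists i, U i y) /\
      ~ exists l : list I, forall y, exists i, In i l /\ U i y) as [I [U [HUo [HUc HUnf]]]].
  { apply NNPP; intro H. apply Hnc. intros I U HU Hc. apply NNPP; intro Hl. apply H.
    exists I, U. split; [auto|split; [intro y; apply Hc; auto|]].
    intros [l Hl']. apply Hl. exists l. intros y _. auto. }
  assert (Hsel : forall n, exists o : option I,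
    match o with Some i => forall y, B n y -> U i y | None => ~ exists i, forall y, B n y -> U i y end).
  { intro n. destruct (classic (exists i, forall y, B n y -> U i y)) as [[i Hi]|h];
      [exists (Some i)|exists None]; auto. }
  destruct (choice _ Hsel) as [sel Hsel'].
  exists (fun n y => match sel n with Some i => U i y | None => False end).
  split; [|split].
  - intro n. destruct (sel n); [apply HUo|intros y []].
  - intro y. destruct (HUc y) as [i Hi]. destruct (HB (U i) (HUo i) y Hi) as [n [Bn Hn]].
    exists n. specialize (Hsel' n). destruct (sel n) as [j|]; [apply Hsel'; auto|].
    apply Hsel'. eauto.
  - intro N. apply NNPP; intro H. apply HUnf.
    exists (flat_map (fun n => match sel n with Some i => i :: nil | None => nil end) (seq 0 (S N))).
    intro y. assert (exists n, (n <= N)%nat /\ match sel n with Some i => U i y | None => False end)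
      as [n [Hn Hv]].
    { apply NNPP; intro H2; apply H; exists y; intros n Hn Hv; apply H2; eauto. }
    destruct (sel n) as [i|] eqn:E; [|contradiction].
    exists i; split; auto. apply in_flat_map. exists n. split; [apply in_seq; lia|]. rewrite E. left; auto.
Qed.

Lemma second_countable_closed_discrete_seq X (d : X -> X -> R) :
  is_metric d -> second_countable d -> ~ is_compact d (fun _ => True) ->
  exists x, closed_discrete_seq d x.
Proof.
  intros Hm Hsc Hnc.
  destruct (countable_cover_no_finite_subcover X d Hsc Hnc) as [V [HVo [HVc HVesc]]].
  destruct (choice _ HVc) as [idx Hidx].
  destruct (choice _ HVesc) as [esc Hesc].
  eexists. apply (escaping_seq_closed_discrete X d Hm V HVo idx Hidx esc Hesc).
Qed.

Theorem flexible_of_manifold (X : Type) (d : X -> X -> R) :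
  is_metric d -> second_countable d -> ~ is_compact d (fun _ => True) ->
  manifold_pos d (fun _ => True) -> flexible d.
Proof.
  intros Hm Hsc Hnc Hman.
  destruct (second_countable_closed_discrete_seq X d Hm Hsc Hnc) as [x Hx].
  assert (Hlc : locally_compact d) by (apply manifold_locally_compact; auto).
  assert (Hpol : polish d)
    by (split; [apply (second_countable_separable X d Hm (x O) Hsc)|
               apply locally_compact_completely_metrizable; auto]).
  (* shrink balls around the [x n] to isolating radii, halved to make them disjoint *)
  destruct Hx as [Hinj [Hcl Hiso]].
  destruct (choice _ Hiso) as [e He].
  apply (flexible_of_manifold_neighbourhoods X d Hm Hlc Hpol x (fun n y => d (x n) y < e n / 2));
    [split; auto| |].
  - intro n. destruct (He n) as [Hen _]. split; [apply is_open_ball; auto|split].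
    + rewrite (dist_refl X d Hm). lra.
    + apply (manifold_open_subset X d (fun _ => True)); auto. apply is_open_ball; auto.
  - intros n k Hnk y H1 H2. destruct (He n) as [Hn Hn']. destruct (He k) as [Hk Hk'].
    pose proof (dist_triangle X d Hm (x n) y (x k)) as Htri. rewrite (dist_sym X d Hm y (x k)) in Htri.
    apply Hnk. destruct (Rle_dec (e k) (e n)).
    + symmetry. apply Hn'. lra.
    + apply Hk'. rewrite (dist_sym X d Hm). lra.
Qed.

Theorem mainTheorem8 :
  (forall (X : Type) (d : X -> X -> R),
     is_metric d -> locally_compact d -> polish d ->
     forall (x : nat -> X) (U : nat -> X -> Prop),
       closed_discrete_seq d x ->
       (forall n, is_open d (U n) /\ U n (x n) /\ manifold_pos d (U n)) ->
       (forall n k, n <> k -> forall y, U n y -> ~ U k y) ->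
       flexible d)
  /\
  (forall (X : Type) (d : X -> X -> R),
     is_metric d -> second_countable d -> ~ is_compact d (fun _ => True) ->
     manifold_pos d (fun _ => True) ->
     flexible d).
Proof.
  split; [exact flexible_of_manifold_neighbourhoods|exact flexible_of_manifold].
Qed.
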